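(* Let $f:\{0,\dots,r-1\}^n\to\mathbb{R}$ be an $r$-valued fitness function and let $i\in\{1,\dots,n\}$ be a neutral position of $f$. Consider the $r$-cGA without margins optimizing $f$. Then, for each $j\in\{0,\dots,r-1\}$, the sequence of frequencies $(p^{(t)}_{i,j})_{t\in\mathbb{N}}$ is a martingale.
   Context: Let $n\geq 1$, $r\geq 2$ be integers and $K>0$. The $r$-cGA maximizing $f$ maintains frequencies $p^{(t)}_{i,j}$ ($i\in\{1,\dots,n\}$, $j\in\{0,\dots,r-1\}$), initialized to $1/r$. In iteration $t$ it samples $x,y\in\{0,\dots,r-1\}^n$ independently, each position $i$ independently with $\Pr[x_i=j]=p^{(t)}_{i,j}$; if $f(x)<f(y)$ it swaps $x$ and $y$; then it sets $p^{(t+1)}_{i,j}=p^{(t)}_{i,j}+\frac1K(\mathbf{1}[x_i=j]-\mathbf{1}[y_i=j])$ for all $i,j$, with no margins restricting frequencies. A position $i$ is neutral for $f$ if for all $x,x'\in\{0,\dots,r-1\}^n$ with $x_k=x'_k$ for all $k\neq i$ we have $f(x)=f(x')$. *)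

From mathcomp Require Import all_boot all_order all_algebra.
Set Implicit Arguments. Unset Strict Implicit. Unset Printing Implicit Defensive.
Import Order.TTheory GRing.Theory Num.Theory.
Local Open Scope ring_scope.

Definition cfg (n r : nat) := {ffun 'I_n -> 'I_r}.

Definition init_freq (R : realFieldType) (n r : nat) : 'M[R]_(n, r) :=
  const_mx (r%:R)^-1.

Definition sample_prob (R : realFieldType) (n r : nat) (p : 'M[R]_(n, r))
  (x : cfg n r) : R := \prod_(i < n) p i (x i).

Definition cga_update (R : realFieldType) (n r : nat) (f : cfg n r -> R) (K : R)
  (p : 'M[R]_(n, r)) (xy : cfg n r * cfg n r) : 'M[R]_(n, r) :=
  let: (x, y) := if f xy.1 < f xy.2 then (xy.2, xy.1) else xy in
  \matrix_(i < n, j < r) (p i j + K^-1 * ((x i == j)%:R - (y i == j)%:R)).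

(* Frequencies p^(s) as a function of the sequence of samples (x,y) drawn in
   iterations 0,1,... *)
Fixpoint cga_traj (R : realFieldType) (n r : nat) (f : cfg n r -> R) (K : R)
  (om : nat -> cfg n r * cfg n r) (s : nat) : 'M[R]_(n, r) :=
  match s with
  | 0 => init_freq R n r
  | s'.+1 => cga_update f K (cga_traj f K om s') (om s')
  end.

Definition ext_seq (n r t : nat) (om : {ffun 'I_t.+1 -> cfg n r * cfg n r})
  : nat -> cfg n r * cfg n r := fun s => om (inord s).

(* Probability that the algorithm draws exactly the samples om in
   iterations 0..t (each x,y sampled independently from the current p). *)
Definition seq_prob (R : realFieldType) (n r t : nat) (f : cfg n r -> R) (K : R)
  (om : {ffun 'I_t.+1 -> cfg n r * cfg n r}) : R :=
  \prod_(s < t.+1)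
     (sample_prob (cga_traj f K (ext_seq om) s) (om s).1 *
      sample_prob (cga_traj f K (ext_seq om) s) (om s).2).

Definition neutral (R : realFieldType) (n r : nat) (f : cfg n r -> R) (i : 'I_n) :=
  forall x x' : cfg n r, (forall k, k != i -> x k = x' k) -> f x = f x'.

From mathcomp Require Import all_boot all_order all_algebra.
From mathcomp Require Import ring.
Set Implicit Arguments. Unset Strict Implicit. Unset Printing Implicit Defensive.
Import Order.TTheory GRing.Theory Num.Theory.
Local Open Scope ring_scope.

(* Exchanging the i-th letters of the two samples drawn in the last iteration
   is a bijection on sample histories.  It preserves the probability of the
   history and, since i is neutral, the decision whether to swap x and y;
   hence it preserves all earlier frequencies but moves p_{i,j} by the
   opposite step -K^-1 (1[x_i = j] - 1[y_i = j]).  Pairing each history with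
   its image, the increments of p_{i,j} cancel. *)

Lemma sum_involution_average (R : numDomainType) (T : finType) (g : T -> T)
    (w a b : T -> R) :
  involutive g -> (forall x, w (g x) = w x) ->
  (forall x, a (g x) + a x = b x *+ 2) ->
  \sum_x w x * a x = \sum_x w x * b x.
Proof.
move=> gK wg ab; apply/eqP; rewrite -[_ == _]orFb -(eqrMn2r 2); apply/eqP.
rewrite mulr2n {1}(reindex_inj (inv_inj gK)) -big_split -sumrMnl /=.
by apply: eq_bigr => x _; rewrite wg -mulrDr ab mulrnAr.
Qed.

Section SwapAt.
Variables (n r : nat) (i : 'I_n).

Definition swap_at (xy : cfg n r * cfg n r) : cfg n r * cfg n r :=
  ([ffun k => if k == i then xy.2 k else xy.1 k],
   [ffun k => if k == i then xy.1 k else xy.2 k]).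

Lemma swap_atK : involutive swap_at.
Proof.
case=> x y; congr pair; apply/ffunP => k; rewrite !ffunE; by case: (k == i).
Qed.

Lemma sample_prob_swap_at (R : realFieldType) (p : 'M[R]_(n, r)) xy :
  sample_prob p (swap_at xy).1 * sample_prob p (swap_at xy).2 =
  sample_prob p xy.1 * sample_prob p xy.2.
Proof.
rewrite /sample_prob -!big_split; apply: eq_bigr => k _; rewrite !ffunE.
by case: (k == i) => //=; rewrite mulrC.
Qed.

Lemma neutral_swap_at (R : realFieldType) (f : cfg n r -> R) xy :
  neutral f i -> f (swap_at xy).1 = f xy.1 /\ f (swap_at xy).2 = f xy.2.
Proof.
by move=> fi; split; apply: fi => k /negbTE ki; rewrite ffunE ki.
Qed.

Lemma cga_update_swap_at (R : realFieldType) (f : cfg n r -> R) (K : R)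
    (p : 'M[R]_(n, r)) xy (j : 'I_r) :
  neutral f i ->
  cga_update f K p (swap_at xy) i j + cga_update f K p xy i j = p i j *+ 2.
Proof.
case: xy => x y /(neutral_swap_at (x, y)) [/= fx fy].
by rewrite /cga_update /= fx fy; case: (f x < f y); rewrite !mxE !ffunE eqxx; ring.
Qed.

End SwapAt.

Lemma cga_traj_eq_prefix (R : realFieldType) (n r : nat) (f : cfg n r -> R)
    (K : R) (om1 om2 : nat -> cfg n r * cfg n r) (s : nat) :
  (forall s', (s' < s)%N -> om1 s' = om2 s') ->
  cga_traj f K om1 s = cga_traj f K om2 s.
Proof.
elim: s => [//|s IHs] eq_om /=.
by rewrite eq_om // IHs // => s' lt_s's; rewrite eq_om // ltnW.
Qed.

Section SwapLast.
Variables (R : realFieldType) (n r : nat) (f : cfg n r -> R) (K : R) (i : 'I_n).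
Variable t : nat.
Implicit Type om : {ffun 'I_t.+1 -> cfg n r * cfg n r}.

Definition swap_last om : {ffun 'I_t.+1 -> cfg n r * cfg n r} :=
  [ffun s => if s == ord_max then swap_at i (om s) else om s].

Lemma swap_lastK : involutive swap_last.
Proof.
move=> om; apply/ffunP => s; rewrite !ffunE.
by case: (s == ord_max); rewrite ?swap_atK.
Qed.

Lemma ext_seq_swap_last om : ext_seq (swap_last om) t = swap_at i (ext_seq om t).
Proof.
rewrite /ext_seq; have -> : inord t = ord_max :> 'I_t.+1.
  by apply: val_inj; rewrite /= inordK.
by rewrite ffunE eqxx.
Qed.

Lemma cga_traj_swap_last om s : (s <= t)%N ->
  cga_traj f K (ext_seq (swap_last om)) s = cga_traj f K (ext_seq om) s.
Proof.
move=> le_st; apply: cga_traj_eq_prefix => s' lt_s's.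
have lt_s't : (s' < t)%N by apply: leq_trans le_st.
by rewrite /ext_seq ffunE -val_eqE /= inordK ?ltn_eqF // ltnS ltnW.
Qed.

Lemma seq_prob_swap_last om : seq_prob f K (swap_last om) = seq_prob f K om.
Proof.
apply: eq_bigr => s _; rewrite (cga_traj_swap_last om (ltn_ord s)) ffunE.
by case: eqP => [->|//]; apply: sample_prob_swap_at.
Qed.

Lemma history_swap_last om (h : {ffun 'I_t.+1 -> 'M[R]_(n, r)}) :
  [forall s : 'I_t.+1, cga_traj f K (ext_seq (swap_last om)) s == h s] =
  [forall s : 'I_t.+1, cga_traj f K (ext_seq om) s == h s].
Proof. by apply: eq_forallb => s; rewrite (cga_traj_swap_last om (ltn_ord s)). Qed.

Lemma cga_traj_swap_last_step om (j : 'I_r) : neutral f i ->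
  cga_traj f K (ext_seq (swap_last om)) t.+1 i j + cga_traj f K (ext_seq om) t.+1 i j
  = cga_traj f K (ext_seq om) t i j *+ 2.
Proof.
by move=> fi; rewrite /= cga_traj_swap_last // ext_seq_swap_last cga_update_swap_at.
Qed.

End SwapLast.

Theorem lemma1 (R : realFieldType) (n r : nat) (K : R) (f : cfg n r -> R)
  (i : 'I_n) (j : 'I_r) :
  (1 <= n)%N -> (2 <= r)%N -> 0 < K -> neutral f i ->
  forall (t : nat) (h : {ffun 'I_t.+1 -> 'M[R]_(n, r)}),
    \sum_(om : {ffun 'I_t.+1 -> cfg n r * cfg n r})
       seq_prob f K om * cga_traj f K (ext_seq om) t.+1 i j *
       ([forall s : 'I_t.+1, cga_traj f K (ext_seq om) s == h s])%:R
    =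
    \sum_(om : {ffun 'I_t.+1 -> cfg n r * cfg n r})
       seq_prob f K om * cga_traj f K (ext_seq om) t i j *
       ([forall s : 'I_t.+1, cga_traj f K (ext_seq om) s == h s])%:R.
Proof.
move=> _ _ _ fi t h.
under eq_bigr do rewrite mulrAC.
under [RHS]eq_bigr do rewrite mulrAC.
apply: (sum_involution_average (@swap_lastK n r i t)) => om.
  by rewrite seq_prob_swap_last history_swap_last.
exact: cga_traj_swap_last_step.
Qed.
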